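(* Let $p$ be a prime, $\Omega=\mathbb{F}_p[[T]]$ and $\Omega_n=\Omega/(T^n)$ for $n\ge 1$. Let $\mathcal{M}$ be the set of pairs $(N_1,N_2)$ of maximal submodules of $\Omega^2$, equipped with the inverse-limit probability space $(\mathcal{M},\mathcal{A},\mathbb{P})$ described in the context, and let $\mathbb{P}^*$ be the associated outer measure. Then \[\mathbb{P}^*\big(\{(N_1,N_2)\in\mathcal{M}\mid N_1\cap N_2=0\}\big)=1.\] Furthermore, \[\sup\{\mathbb{P}(B)\mid B\in\mathcal{A},\ B\subset \{(N_1,N_2)\in\mathcal{M}\mid N_1\cap N_2=0\}\}=1.\]
   Context: A cyclic submodule $N\subset\Omega^2$ (resp. $N\subset\Omega_n^2$) is called maximal if it is not contained in $T\Omega^2$ (resp. $T\Omega_n^2$). Let $\mathcal{M}_n$ be the (finite) set of pairs $(\bar N_1,\bar N_2)$ of maximal submodules of $\Omega_n^2$, with $\mathcal{A}_n$ its power set and $\mathbb{P}_n$ the uniform probability measure on $\mathcal{M}_n$. Reduction modulo $T^n$ gives projections $\pi_n:\mathcal{M}\to\mathcal{M}_n$ and $\pi_{m,n}:\mathcal{M}_m\to\mathcal{M}_n$ ($m\ge n$), so that $\mathcal{M}=\varprojlim_n\mathcal{M}_n$ and $((\mathcal{M}_n,\mathcal{A}_n,\mathbb{P}_n),\pi_{m,n})$ is a projective system of probability spaces; $(\mathcal{M},\mathcal{A},\mathbb{P})$ denotes its inverse limit (so $\mathbb{P}(\pi_n^{-1}(A))=\mathbb{P}_n(A)$ for $A\in\mathcal{A}_n$).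 For any $X\subset\mathcal{M}$, $\mathbb{P}^*(X):=\inf_{X\subset B\in\mathcal{A}}\mathbb{P}(B)$. *)

From HB Require Import structures.
From mathcomp Require Import all_boot all_order all_algebra.
From mathcomp Require Import all_classical all_reals all_analysis.
Set Implicit Arguments. Unset Strict Implicit. Unset Printing Implicit Defensive.
Import Order.TTheory GRing.Theory Num.Theory.
Local Open Scope classical_set_scope.
Local Open Scope ring_scope.

Section Omega.
Variable p : nat.

Definition Omega := nat -> 'F_p.
Definition Omega2 := (Omega * Omega)%type.

Definition ps_mul (a b : Omega) : Omega :=
  fun k => \sum_(i < k.+1) a i * b (k - i)%N.
Definition ps_T : Omega := fun k => if k == 1%N then 1 else 0.
Definition scale2 (a : Omega) (v : Omega2) : Omega2 := (ps_mul a v.1, ps_mul a v.2).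
Definition zero2 : Omega2 := (fun _ => 0, fun _ => 0).

Definition cyc (v : Omega2) : set Omega2 := [set scale2 a v | a in [set: Omega]].
Definition TOmega2 : set Omega2 := [set scale2 ps_T w | w in [set: Omega2]].

Definition maximal_sub (N : set Omega2) : Prop :=
  (exists v, N = cyc v) /\ ~ (N `<=` TOmega2).

Definition Omegan (n : nat) := {ffun 'I_n -> 'F_p}.
Definition Omegan2 (n : nat) := (Omegan n * Omegan n)%type.

Definition getc n (a : Omegan n) (k : nat) : 'F_p :=
  if insub k is Some i then a i else 0.
Definition pn_mul n (a b : Omegan n) : Omegan n :=
  [ffun k : 'I_n => \sum_(i < n | (i <= k)%N) getc a i * getc b (k - i)%N].
Definition pn_T n : Omegan n := [ffun k : 'I_n => if val k == 1%N then 1 else 0].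
Definition scalen2 n (a : Omegan n) (v : Omegan2 n) : Omegan2 n :=
  (pn_mul a v.1, pn_mul a v.2).

Definition cycn n (v : Omegan2 n) : {set Omegan2 n} :=
  [set scalen2 a v | a : Omegan n].
Definition TOmegan2 n : {set Omegan2 n} :=
  [set scalen2 (pn_T n) w | w : Omegan2 n].

Definition maximal_subn n (N : {set Omegan2 n}) : bool :=
  [exists v, N == cycn v] && ~~ (N \subset TOmegan2 n).

Definition Mn n : {set {set Omegan2 n} * {set Omegan2 n}} :=
  [set NN | maximal_subn NN.1 & maximal_subn NN.2].

Definition Pn (R : realType) n (A : {set {set Omegan2 n} * {set Omegan2 n}}) : R :=
  (#|A|%:R / #|Mn n|%:R).

Definition M := {NN : set Omega2 * set Omega2 | maximal_sub NN.1 /\ maximal_sub NN.2}.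

Definition trunc n (a : Omega) : Omegan n := [ffun k : 'I_n => a (val k)].
Definition trunc2 n (v : Omega2) : Omegan2 n := (trunc n v.1, trunc n v.2).
Definition red n (N : set Omega2) : {set Omegan2 n} :=
  [set y | `[< exists2 x, N x & trunc2 n x = y >]].
Definition piM n (x : M) : {set Omegan2 n} * {set Omegan2 n} :=
  (red n (sval x).1, red n (sval x).2).

Definition cylinders : set (set M) :=
  [set C | exists n (A : {set {set Omegan2 n} * {set Omegan2 n}}),
     (1 <= n)%N /\ A \subset Mn n /\ C = piM n @^-1` [set x | x \in A]].

End Omega.

Definition e1 p : Omega2 p := (fun k => if k == 0%N then 1 else 0, fun _ => 0).

Lemma maximal_e1 p : maximal_sub (cyc (e1 p)).
Proof.
split; first by exists (e1 p).
move=> /(_ (e1 p)) [].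
  exists (fun k => if k == 0%N then 1 else 0) => //.
  rewrite /scale2 /e1 /ps_mul /=; congr pair; apply: funext => k.
    case: k => [|k]; first by rewrite big_ord1 /= mulr1.
    rewrite big1 // => i _; case: (nat_of_ord i) => [|j] /=.
      by rewrite mulr0.
    by rewrite mul0r.
  by rewrite big1 // => i _; rewrite mulr0.
move=> w _ /(congr1 (fun v => v.1 0%N)) /=.
rewrite /ps_mul /ps_T /= big_ord_recl big_ord0 /= mul0r addr0.
by move/eqP; rewrite eq_sym oner_eq0.
Qed.

Definition M0 p : M p := exist _ (cyc (e1 p), cyc (e1 p)) (conj (maximal_e1 p) (maximal_e1 p)).

Section MPointed.
Variable p : nat.
HB.instance Definition _ := gen_eqMixin (M p).
HB.instance Definition _ := gen_choiceMixin (M p).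
HB.instance Definition _ := isPointed.Build (M p) (M0 p).
End MPointed.

Definition Mmeas p := g_sigma_algebraType (@cylinders p).

Definition outerP d (T : measurableType d) (R : realType)
  (P : probability T R) (X : set T) : \bar R :=
  ereal_inf [set P B | B in [set B | measurable B /\ X `<=` B]].
Definition innerP d (T : measurableType d) (R : realType)
  (P : probability T R) (X : set T) : \bar R :=
  ereal_sup [set P B | B in [set B | measurable B /\ B `<=` X]].

Definition Disj p : set (Mmeas p) :=
  [set x | (sval x).1 `&` (sval x).2 = [set zero2 p]].

From HB Require Import structures.
From mathcomp Require Import all_boot all_order all_algebra.
From mathcomp Require Import all_classical all_reals all_analysis.
Set Implicit Arguments. Unset Strict Implicit. Unset Printing Implicit Defensive.
Import Order.TTheory GRing.Theory Num.Theory.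
Local Open Scope classical_set_scope.
Local Open Scope ring_scope.

(* A vector of Omega^2 (or Omega_n^2) is primitive when it is not in T Omega^2,
   i.e. one of its constant terms is nonzero; every maximal cyclic submodule is
   generated by a primitive vector. In Omega_n^2, multiplication by a primitive
   vector is injective, so a maximal submodule is generated by any of its
   primitive vectors, and two maximal submodules sharing one coincide. Hence at
   most s of the s^2 pairs of M_n share a primitive vector, where the number s of
   maximal submodules is at least p^n >= n (the submodules Omega_n (1, c) are
   pairwise distinct). In Omega^2, if a v = b w <> 0 with v, w primitive and a v
   not primitive, then T divides both a and b; dividing by T as often as needed
   yields a common primitive vector of the two submodules. Its reduction modulo
   T^n is a common primitive vector of the reductions, so the cylinder of pairs
   whose reductions share no primitive vector lies inside the set of pairs with
   N1 ∩ N2 = 0 and has probability at least 1 - 1/n. *)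

Lemma lee1_of_le1BinvS (R : realType) (y : \bar R) :
  (forall k, ((1 - k.+1%:R^-1 : R)%:E <= y)%E) -> (1 <= y)%E.
Proof.
move=> hy; apply/lee_addgt0Pr => e e0.
set k := Num.truncn e^-1.
have ltk : k.+1%:R^-1 < e.
  by rewrite -[e]invrK ltf_pV2 ?posrE ?invr_gt0 ?ltr0Sn ?truncnS_gt.
apply: le_trans (leeD2r _ (hy k)); rewrite -EFinD lee_fin.
by rewrite -addrA lerDl addrC subr_ge0 ltW.
Qed.

Section InnerOuter.
Variables (d : measure_display) (T : measurableType d) (R : realType).
Variables (P : probability T R) (X : set T).

Lemma outerP_le1 : (outerP P X <= 1)%E.
Proof.
by rewrite -(probability_setT P); apply: ereal_inf_lbound; exists setT.
Qed.

Lemma innerP_le_outerP : (innerP P X <= outerP P X)%E.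
Proof.
apply: ge_ereal_sup => _ [B [mB BX] <-]; apply: le_ereal_inf_tmp => _ [C [mC XC] <-].
by apply: le_measure; rewrite ?inE //; apply: subset_trans XC.
Qed.

Lemma innerP_outerP_eq1 :
  (forall k, exists2 B, measurable B /\ B `<=` X & ((1 - k.+1%:R^-1 : R)%:E <= P B)%E) ->
  outerP P X = 1%E /\ innerP P X = 1%E.
Proof.
move=> approx; have inner_ge1 : (1 <= innerP P X)%E.
  apply: lee1_of_le1BinvS => k; have [B BX PB] := approx k.
  by apply: le_ereal_sup_tmp; exists (P B) => //; exists B.
have inner_le_outer := innerP_le_outerP; have outer_le1 := outerP_le1.
by split; apply/le_anti/andP; split => //;
  [apply: le_trans inner_le_outer | apply: le_trans outer_le1].
Qed.

End InnerOuter.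

Lemma card_setXD_ratio_ge (R : realFieldType) (T : finType) (S : {set T})
    (D : {set T * T}) :
  (0 < #|S|)%N -> D \subset finset.setX S S -> (#|D| <= #|S|)%N ->
  1 - #|S|%:R^-1 <= #|finset.setX S S :\: D|%:R / #|finset.setX S S|%:R :> R.
Proof.
move=> S_gt0 DSS D_le; rewrite cardsD (finset.setIidPr DSS) cardsX.
have SS_gt0 : (0 < #|S| * #|S|)%N by rewrite muln_gt0 S_gt0.
have D_leSS : (#|D| <= #|S| * #|S|)%N by rewrite (leq_trans D_le) ?leq_pmulr.
rewrite natrB // mulrBl divff ?pnatr_eq0 -?lt0n // lerD2l lerN2.
rewrite ler_pdivrMr ?ltr0n // natrM mulrA mulVf ?mul1r ?ler_nat //.
by rewrite pnatr_eq0 -lt0n.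
Qed.

Lemma coefM_eqr (R : nzRingType) (P Q Q' : {poly R}) k :
  (forall j, (j <= k)%N -> Q`_j = Q'`_j) -> (P * Q)`_k = (P * Q')`_k.
Proof. by move=> eqQ; rewrite !coefM; apply: eq_bigr => j _; rewrite eqQ ?leq_subr. Qed.

Section TruncatedSeries.
Variables (p n : nat).
Implicit Types (a b c u : Omegan p n) (v z : Omegan2 p n).

Definition poln a : {poly 'F_p} := \poly_(i < n) getc a i.

Lemma getc_ge a k : (n <= k)%N -> getc a k = 0.
Proof. by move=> nk; rewrite /getc insubN // -leqNgt. Qed.

Lemma getc_ord a (i : 'I_n) : getc a i = a i.
Proof. by rewrite /getc valK. Qed.

Lemma getc_inj a b : getc a =1 getc b -> a = b.
Proof. by move=> eq_ab; apply/ffunP => i; rewrite -!getc_ord eq_ab. Qed.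

Lemma coef_poln a i : (poln a)`_i = getc a i.
Proof. by rewrite coef_poly; case: ltnP => // ni; rewrite getc_ge. Qed.

Lemma getc_pn_mul a b k :
  getc (pn_mul a b) k = if (k < n)%N then (poln a * poln b)`_k else 0.
Proof.
rewrite /getc; case: insubP => [i kn vi|]; last by move/negbTE->.
rewrite kn ffunE coefM.
rewrite (big_ord_widen_cond n xpredT (fun j => (poln a)`_j * (poln b)`_(k - j)) kn).
by apply: eq_big => [j|j _]; rewrite -?vi ?ltnS ?coef_poln.
Qed.

Lemma pn_mulC a b : pn_mul a b = pn_mul b a.
Proof. by apply: getc_inj => k; rewrite !getc_pn_mul mulrC. Qed.

Lemma pn_mulA a b c : pn_mul a (pn_mul b c) = pn_mul (pn_mul a b) c.
Proof.
apply: getc_inj => k; rewrite !getc_pn_mul; case: ltnP => // kn.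
have poln_pn_mul x y j : (j <= k)%N -> (poln (pn_mul x y))`_j = (poln x * poln y)`_j.
  by move=> jk; rewrite coef_poln getc_pn_mul (leq_ltn_trans jk kn).
rewrite (coefM_eqr _ (poln_pn_mul b c)) [in RHS]mulrC (coefM_eqr _ (poln_pn_mul a b)).
by rewrite mulrA [poln c * _]mulrC.
Qed.

Definition primitiven z : bool := (getc z.1 0 != 0) || (getc z.2 0 != 0).

Lemma pn_mulIl u : getc u 0 != 0 -> injective (fun a => pn_mul a u).
Proof.
move=> u0 a b /= eq_au_bu; set d := poln a - poln b.
have du_eq0 k : (k < n)%N -> (d * poln u)`_k = 0.
  move=> kn; have := congr1 (fun x => getc x k) eq_au_bu.
  by rewrite !getc_pn_mul kn mulrBl coefB => ->; rewrite subrr.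
have d_eq0 k : (k < n)%N -> d`_k = 0.
  elim/ltn_ind: k => k IHk kn; move/eqP: (du_eq0 k kn).
  rewrite coefM big_ord_recr /= big1 ?add0r => [|j _]; last first.
    by rewrite IHk ?mul0r // (ltn_trans _ kn).
  by rewrite subnn coef_poln mulf_eq0 (negbTE u0) orbF => /eqP.
apply: getc_inj => k; case: (ltnP k n) => kn; last by rewrite !getc_ge.
by apply/eqP; rewrite -subr_eq0 -!coef_poln -coefB d_eq0.
Qed.

Lemma scalen2_inj z : primitiven z -> injective (fun a => scalen2 a z).
Proof. by case/orP => z0 a b [eq1 eq2]; [apply: pn_mulIl eq1 | apply: pn_mulIl eq2]. Qed.

Lemma cycn_primitive v z : primitiven z -> z \in cycn v -> cycn v = cycn z.
Proof.
move=> zP /imsetP [a _ z_av]; rewrite z_av in zP *.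
apply/esym/eqP; rewrite eqEcard; apply/andP; split.
  apply/fintype.subsetP => _ /imsetP [b _ ->]; apply/imsetP; exists (pn_mul b a) => //.
  by rewrite /scalen2 /= !pn_mulA.
by rewrite (leq_trans (leq_imset_card _ _)) // /cycn card_imset //; apply: scalen2_inj.
Qed.

Hypothesis n_gt0 : (0 < n)%N.

Definition pn_1 : Omegan p n := [ffun i : 'I_n => (val i == 0%N)%:R].

Lemma poln_1 : poln pn_1 = 1.
Proof.
apply/polyP => i; rewrite coef_poln coef1 /getc.
case: insubP => [j _ <-|]; first by rewrite ffunE.
by rewrite -leqNgt; case: i => // /(leq_trans n_gt0).
Qed.

Lemma getc_pn_1_0 : getc pn_1 0 = 1.
Proof. by rewrite -coef_poln poln_1 coef1. Qed.

Lemma pn_mul1 a : pn_mul pn_1 a = a.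
Proof.
apply: getc_inj => k; rewrite getc_pn_mul poln_1 mul1r coef_poln.
by case: ltnP => // nk; rewrite getc_ge.
Qed.

Lemma getc_TOmegan2_0 w : w \in TOmegan2 p n -> getc w.1 0 = 0.
Proof.
case/imsetP => w' _ -> /=; rewrite getc_pn_mul n_gt0 coef0M !coef_poln.
suff -> : getc (pn_T p n) 0 = 0 by rewrite mul0r.
by rewrite /getc; case: insubP => // j _ j0; rewrite ffunE j0.
Qed.

Definition maxsubn : {set {set Omegan2 p n}} := [set N | maximal_subn N].

Lemma Mn_setX : Mn p n = finset.setX maxsubn maxsubn.
Proof. by apply/setP => -[N1 N2]; rewrite !inE. Qed.

Definition graphn c : {set Omegan2 p n} := cycn (pn_1, c).

Lemma graphn_mem c : (pn_1, c) \in graphn c.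
Proof. by apply/imsetP; exists pn_1; rewrite // /scalen2 /= !pn_mul1. Qed.

Lemma graphn_maximal c : graphn c \in maxsubn.
Proof.
rewrite inE /maximal_subn; apply/andP; split; first by apply/existsP; exists (pn_1, c).
apply/negP => /fintype.subsetP /(_ _ (graphn_mem c)) /getc_TOmegan2_0 /=.
by rewrite getc_pn_1_0 => /eqP; rewrite oner_eq0.
Qed.

Lemma graphn_inj : injective graphn.
Proof.
move=> c c' eq_cc'; have := graphn_mem c'; rewrite -eq_cc' => /imsetP [a _ [a1 c'E]].
by move: a1 c'E; rewrite pn_mulC pn_mul1 => <-; rewrite pn_mul1.
Qed.

Lemma card_Omegan_le_maxsubn : (#|Omegan p n| <= #|maxsubn|)%N.
Proof.
rewrite -(card_imset _ graphn_inj); apply: subset_leq_card.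
by apply/fintype.subsetP => _ /imsetP [c _ ->]; apply: graphn_maximal.
Qed.

Definition share_primn : {set {set Omegan2 p n} * {set Omegan2 p n}} :=
  [set NN in Mn p n | [exists z, [&& z \in NN.1, z \in NN.2 & primitiven z]]].

Lemma share_primn_sub : share_primn \subset Mn p n.
Proof. by apply/fintype.subsetP => NN; rewrite inE => /andP []. Qed.

Lemma maximal_subn_cycn N : maximal_subn N -> exists v, N = cycn v.
Proof. by case/andP => /existsP [v /eqP ->] _; exists v. Qed.

Lemma card_share_primn : (#|share_primn| <= #|maxsubn|)%N.
Proof.
apply: (@leq_trans #|[set (N, N) | N in maxsubn]%SET|); last exact: leq_imset_card.
apply/subset_leq_card/fintype.subsetP => -[N1 N2].
rewrite !inE /= => /andP [/andP [N1max N2max] /existsP [z /and3P [zN1 zN2 zP]]].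
apply/imsetP; exists N1; first by rewrite inE.
have [v1 N1E] := maximal_subn_cycn N1max; have [v2 N2E] := maximal_subn_cycn N2max.
move: zN1 zN2; rewrite N1E N2E => zN1 zN2.
by rewrite (cycn_primitive zP zN1) (cycn_primitive zP zN2).
Qed.

Hypothesis p_prime : prime p.

Lemma n_le_card_maxsubn : (n <= #|maxsubn|)%N.
Proof.
apply: leq_trans card_Omegan_le_maxsubn.
rewrite card_ffun card_Fp // card_ord.
exact/ltnW/ltn_expl/prime_gt1.
Qed.

Lemma Pn_share_primnC_ge (R : realType) :
  1 - n%:R^-1 <= Pn R (Mn p n :\: share_primn) :> R.
Proof.
have maxsubn_gt0 := leq_trans n_gt0 n_le_card_maxsubn.
have share_sub : share_primn \subset finset.setX maxsubn maxsubn.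
  by rewrite -Mn_setX share_primn_sub.
rewrite /Pn Mn_setX.
apply: le_trans (card_setXD_ratio_ge R maxsubn_gt0 share_sub card_share_primn).
by rewrite lerD2l lerN2 lef_pV2 ?posrE ?ltr0n ?ler_nat ?n_le_card_maxsubn.
Qed.

End TruncatedSeries.

Section PowerSeries.
Variable p : nat.
Implicit Types (a b c : Omega p) (v w z : Omega2 p).

Definition primitive v : bool := (v.1 0%N != 0) || (v.2 0%N != 0).

Definition ps_shift a : Omega p := fun k => a k.+1.

Lemma ps_mul0 a b : ps_mul a b 0%N = a 0%N * b 0%N.
Proof. by rewrite /ps_mul big_ord1. Qed.

Lemma ps_mulS a b k : a 0%N = 0 -> ps_mul a b k.+1 = ps_mul (ps_shift a) b k.
Proof.
move=> a0; rewrite /ps_mul big_ord_recl /= a0 mul0r add0r.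
by apply: eq_bigr => i _; rewrite /ps_shift /bump /= add1n subSS.
Qed.

Lemma ps_mulT0 c : ps_mul (ps_T p) c 0%N = 0.
Proof. by rewrite ps_mul0 mul0r. Qed.

Lemma ps_mulTS c k : ps_mul (ps_T p) c k.+1 = c k.
Proof.
rewrite ps_mulS // /ps_mul big_ord_recl /= /ps_shift /ps_T /= mul1r subn0 big1 ?addr0 //.
by move=> i _; rewrite mul0r.
Qed.

Lemma cyc_zero2 v : cyc v (zero2 p).
Proof.
exists (fun _ => 0) => //; rewrite /scale2 /zero2.
by congr pair; apply: funext => k; rewrite /ps_mul big1 // => i _; rewrite mul0r.
Qed.

Lemma maximal_sub_primitive N : maximal_sub N -> exists2 v, N = cyc v & primitive v.
Proof.
case=> [[v ->] notT]; exists v => //; apply: contraT; rewrite negb_or !negbK.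
case/andP => /eqP v10 /eqP v20; case: notT => _ [a _ <-].
exists (ps_shift (ps_mul a v.1), ps_shift (ps_mul a v.2)) => //.
by rewrite /scale2 /=; congr pair; apply: funext => -[|k];
  rewrite ?ps_mulT0 ?ps_mulTS ?ps_mul0 ?v10 ?v20 ?mulr0.
Qed.

Lemma scale2_primitive_const0 a v :
  primitive v -> ~~ primitive (scale2 a v) -> a 0%N = 0.
Proof.
rewrite /primitive /scale2 /= !ps_mul0 negb_or !negbK !mulf_eq0.
case/orP => /negbTE v0 /andP [h1 h2]; apply/eqP; [move: h1 | move: h2];
  by rewrite v0 orbF.
Qed.

Lemma scale2_ps_shift a v : a 0%N = 0 ->
  scale2 (ps_shift a) v = (ps_shift (scale2 a v).1, ps_shift (scale2 a v).2).
Proof. by move=> a0; congr pair; apply: funext => k; rewrite -ps_mulS. Qed.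

Lemma nonzero2_coef z : z <> zero2 p -> exists k, (z.1 k != 0) || (z.2 k != 0).
Proof.
move=> z_neq0; apply: contrapT => all0; apply: z_neq0; case: z all0 => z1 z2 all0.
congr pair; apply: funext => k;
  [case: (eqVneq (z1 k) 0) | case: (eqVneq (z2 k) 0)] => // zk; case: all0.
  by exists k; rewrite zk.
by exists k; rewrite zk orbT.
Qed.

Lemma scale2_eq_primitive v w a b :
  primitive v -> primitive w -> scale2 a v = scale2 b w -> scale2 a v <> zero2 p ->
  exists a', exists2 b', scale2 a' v = scale2 b' w & primitive (scale2 a' v).
Proof.
move=> vP wP + /nonzero2_coef [k]; elim: k a b => [|k IHk] a b eq_ab nz_k.
  by exists a, b.
have [|avN] := boolP (primitive (scale2 a v)); first by exists a, b.
have bwN : ~~ primitive (scale2 b w) by rewrite -eq_ab.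
have a0 := scale2_primitive_const0 vP avN; have b0 := scale2_primitive_const0 wP bwN.
by apply: (IHk (ps_shift a) (ps_shift b)); rewrite !scale2_ps_shift // eq_ab.
Qed.

Lemma maximal_sub_meet_primitive N1 N2 :
  maximal_sub N1 -> maximal_sub N2 -> N1 `&` N2 <> [set zero2 p] ->
  exists2 z, (N1 `&` N2) z & primitive z.
Proof.
move=> /maximal_sub_primitive [v -> vP] /maximal_sub_primitive [w -> wP] meet_neq0.
have [z [[a _ az] [b _ bz]] z_neq0] : exists2 z, (cyc v `&` cyc w) z & z <> zero2 p.
  apply: contrapT => all0; apply: meet_neq0; apply/seteqP; split => [z zvw|_ ->].
    by apply: contrapT => z_neq0; apply: all0; exists z.
  by split; apply: cyc_zero2.
rewrite -az in z_neq0; rewrite -bz in az.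
have [a' [b' eq_ab' avP]] := scale2_eq_primitive vP wP az z_neq0.
by exists (scale2 a' v) => //; split; [exists a' | exists b'].
Qed.

End PowerSeries.

Section Cylinders.
Variable p : nat.

Lemma primitiven_trunc2 n (z : Omega2 p) : primitiven (trunc2 n.+1 z) = primitive z.
Proof.
by rewrite /primitiven /primitive /getc /=; case: insubP => // i _ i0; rewrite !ffunE i0.
Qed.

Lemma trunc2_red n (N : set (Omega2 p)) z : N z -> trunc2 n z \in red n N.
Proof. by move=> Nz; rewrite inE; apply/asboolP; exists z. Qed.

Lemma measurable_cylinder n (A : {set {set Omegan2 p n} * {set Omegan2 p n}}) :
  (1 <= n)%N -> A \subset Mn p n ->
  measurable (piM n @^-1` [set x | x \in A] : set (Mmeas p)).
Proof. by move=> n_gt0 AM; apply: sub_gen_smallest; exists n, A. Qed.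

Definition no_shared_primitive n : set (Mmeas p) :=
  piM n @^-1` [set x | x \in Mn p n :\: share_primn p n].

Lemma no_shared_primitive_Disj n : no_shared_primitive n.+1 `<=` @Disj p.
Proof.
case=> -[N1 N2] [N1max N2max]; rewrite /no_shared_primitive /Disj /= inE.
case/andP => notshared inM; apply: contrapT => meet_neq0.
have [z [zN1 zN2] zP] := maximal_sub_meet_primitive N1max N2max meet_neq0.
move/negP: notshared; apply; rewrite inE inM; apply/existsP; exists (trunc2 n.+1 z).
by rewrite !trunc2_red ?primitiven_trunc2.
Qed.

Section Probability.
Variables (R : realType) (P : probability (Mmeas p) R).
Hypothesis p_prime : prime p.
Hypothesis P_compat : forall (n : nat) (A : {set {set Omegan2 p n} * {set Omegan2 p n}}),
  (1 <= n)%N -> A \subset Mn p n ->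
  P (@piM p n @^-1` [set x | x \in A]) = (Pn R A)%:E.

Lemma P_no_shared_primitive_ge n :
  ((1 - n.+1%:R^-1 : R)%:E <= P (no_shared_primitive n.+1))%E.
Proof. by rewrite P_compat ?subsetDl // lee_fin Pn_share_primnC_ge. Qed.

End Probability.
End Cylinders.

Theorem theorem4p8 (p : nat) (p_prime : prime p) (R : realType)
  (P : probability (Mmeas p) R)
  (P_compat : forall (n : nat) (A : {set {set Omegan2 p n} * {set Omegan2 p n}}),
      (1 <= n)%N -> A \subset Mn p n ->
      P (@piM p n @^-1` [set x | x \in A]) = (Pn R A)%:E) :
  outerP P (@Disj p) = 1%E /\ innerP P (@Disj p) = 1%E.
Proof.
apply: innerP_outerP_eq1 => n; exists (@no_shared_primitive p n.+1).
  split; last exact: no_shared_primitive_Disj.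
  by apply: measurable_cylinder => //; apply: subsetDl.
exact: P_no_shared_primitive_ge p_prime P_compat n.
Qed.
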